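(* Every WHB-algebra $\mathbf A$ is isomorphic to a subalgebra of $\mathcal A(\mathcal F(\mathbf A))=(\mathrm{Up}(X(\mathbf A)),\cap,\cup,\Rightarrow_{R_{\mathbf A}},\Leftarrow_{S_{\mathbf A}},\emptyset,X(\mathbf A))$.
   Context: A WHB-algebra is an algebra $(A,\wedge,\vee,\to,\leftarrow,0,1)$ such that $(A,\wedge,\vee,0,1)$ is a bounded distributive lattice and for all $a,b,c\in A$: $a\to a=1$; $a\to(b\wedge c)=(a\to b)\wedge(a\to c)$; $(a\vee b)\to c=(a\to c)\wedge(b\to c)$; $(a\to b)\wedge(b\to c)\le a\to c$; $a\leftarrow a=0$; $(a\vee b)\leftarrow c=(a\leftarrow c)\vee(b\leftarrow c)$; $a\leftarrow(b\wedge c)=(a\leftarrow b)\vee(a\leftarrow c)$; $a\leftarrow c\le(a\leftarrow b)\vee(b\leftarrow c)$; $a\wedge((a\to b)\leftarrow 0)\le b$; $a\le b\vee(1\to(a\leftarrow b))$. $X(\mathbf A)$ is the set of prime filters of $\mathbf A$, ordered by inclusion; $\mathrm{Up}(X(\mathbf A))$ is the set of its upsets. $(P,Q)\in R_{\mathbf A}$ iff for all $a,b$, $a\to b\in P$ and $a\in Q$ imply $b\in Q$; $(P,Q)\in S_{\mathbf A}$ iff for all $a,b$, $a\in Q$ and $b\notin Q$ imply $a\leftarrow b\in P$. $\mathcal F(\mathbf A)=(X(\mathbf A),\subseteq,R_{\mathbf A},S_{\mathbf A})$. For upsets $U,V$: $U\Rightarrow_R V=\{x\colon R(x)\cap U\subseteq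 V\}$ and $U\Leftarrow_S V=\{x\colon S(x)\cap(U\setminus V)\neq\emptyset\}$, where $\mathcal R(x)=\{y\colon(x,y)\in\mathcal R\}$. *)

From Stdlib Require Import Classical FunctionalExtensionality PropExtensionality.

Set Implicit Arguments.

Record WHB := {
  car :> Type;
  meet : car -> car -> car;
  join : car -> car -> car;
  imp : car -> car -> car;
  coimp : car -> car -> car;
  bot : car;
  top : car;
  meetA : forall a b c, meet a (meet b c) = meet (meet a b) c;
  joinA : forall a b c, join a (join b c) = join (join a b) c;
  meetC : forall a b, meet a b = meet b a;
  joinC : forall a b, join a b = join b a;
  meet_absorb : forall a b, meet a (join a b) = a;
  join_absorb : forall a b, join a (meet a b) = a;
  meet_joinD : forall a b c, meet a (join b c) = join (meet a b) (meet a c);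
  join_bot : forall a, join a bot = a;
  meet_top : forall a, meet a top = a;
  (* WHB axioms, with a <= b  :=  meet a b = a *)
  imp_refl : forall a, imp a a = top;
  imp_meet : forall a b c, imp a (meet b c) = meet (imp a b) (imp a c);
  imp_join : forall a b c, imp (join a b) c = meet (imp a c) (imp b c);
  imp_trans : forall a b c,
      meet (meet (imp a b) (imp b c)) (imp a c) = meet (imp a b) (imp b c);
  coimp_refl : forall a, coimp a a = bot;
  coimp_join : forall a b c, coimp (join a b) c = join (coimp a c) (coimp b c);
  coimp_meet : forall a b c, coimp a (meet b c) = join (coimp a b) (coimp a c);
  coimp_trans : forall a b c,
      meet (coimp a c) (join (coimp a b) (coimp b c)) = coimp a c;
  ax9 : forall a b, meet (meet a (coimp (imp a b) bot)) b
                    = meet a (coimp (imp a b) bot);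
  ax10 : forall a b, meet a (join b (imp top (coimp a b))) = a
}.

Arguments meet {w} _ _.
Arguments join {w} _ _.
Arguments imp {w} _ _.
Arguments coimp {w} _ _.

Section Frame.
Variable A : WHB.

Definition le (a b : A) : Prop := meet a b = a.

Definition prime_filter (P : A -> Prop) : Prop :=
  P (top A) /\
  (forall a b, P a -> le a b -> P b) /\
  (forall a b, P a -> P b -> P (meet a b)) /\
  ~ P (bot A) /\
  (forall a b, P (join a b) -> P a \/ P b).

Definition pfilter : Type := { P : A -> Prop | prime_filter P }.

Definition pf (P : pfilter) : A -> Prop := proj1_sig P.

Definition pf_le (P Q : pfilter) : Prop := forall a, pf P a -> pf Q a.

Definition is_upset (U : pfilter -> Prop) : Prop :=
  forall P Q, pf_le P Q -> U P -> U Q.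

Definition RA (P Q : pfilter) : Prop :=
  forall a b, pf P (imp a b) -> pf Q a -> pf Q b.

Definition SA (P Q : pfilter) : Prop :=
  forall a b, pf Q a -> ~ pf Q b -> pf P (coimp a b).

Definition set_cap (U V : pfilter -> Prop) : pfilter -> Prop :=
  fun x => U x /\ V x.
Definition set_cup (U V : pfilter -> Prop) : pfilter -> Prop :=
  fun x => U x \/ V x.
Definition set_empty : pfilter -> Prop := fun _ => False.
Definition set_full : pfilter -> Prop := fun _ => True.

Definition impR (U V : pfilter -> Prop) : pfilter -> Prop :=
  fun x => forall y, RA x y -> U y -> V y.

Definition coimpS (U V : pfilter -> Prop) : pfilter -> Prop :=
  fun x => exists y, SA x y /\ U y /\ ~ V y.

Definition embeds_into_complex_algebra (h : A -> (pfilter -> Prop)) : Prop :=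
  (forall a, is_upset (h a)) /\
  (forall a b, h a = h b -> a = b) /\
  (forall a b, h (meet a b) = set_cap (h a) (h b)) /\
  (forall a b, h (join a b) = set_cup (h a) (h b)) /\
  (forall a b, h (imp a b) = impR (h a) (h b)) /\
  (forall a b, h (coimp a b) = coimpS (h a) (h b)) /\
  h (bot A) = set_empty /\
  h (top A) = set_full.

End Frame.

(* The embedding is the Stone map, sending a to the set of prime filters
   containing it.  Meets, joins and the bounds are preserved because the
   filters are prime, and injectivity is the prime filter theorem.  The
   inclusion of [stone a ⇒_R stone b] in [stone (a → b)] needs, when
   [a → b ∉ P], a prime filter [Q] with [R P Q], [a ∈ Q] and [b ∉ Q]: take
   the complement of an ideal containing [b] that is maximal among the ideals
   disjoint from the filter {x | a → x ∈ P}; maximality says that each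
   [x ∈ Q] has some [i ∉ Q] with [a → (i ∨ x) ∈ P], and this yields [R P Q].
   Dually, for [a ← b ∈ P] one takes a filter containing [a] maximal among
   those disjoint from the ideal {x | x ← b ∉ P}.  Both come from a single
   Zorn argument, applied to the lattice of [A] and to its order dual. *)

From Stdlib Require Import Classical FunctionalExtensionality PropExtensionality.
From mathcomp Require classical_sets.

Set Implicit Arguments.

Lemma zorn_subset (T : Type) (P : (T -> Prop) -> Prop) :
  (forall C : (T -> Prop) -> Prop, (forall X, C X -> P X) ->
     (forall X Y, C X -> C Y -> (forall t, X t -> Y t) \/ (forall t, Y t -> X t)) ->
     P (fun t => exists2 X, C X & X t)) ->
  exists M, P M /\ forall B, P B -> (forall t, M t -> B t) -> forall t, B t -> M t.
Proof.
intros Hchain.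
destruct (@classical_sets.Zorn_bigcup T P Hchain) as [M [PM Mmax]].
exists M; split; [exact PM|].
intros B PB MB t Bt. apply NNPP; intros nMt.
apply (Mmax B); [split; [exact MB|] | exact PB].
intros BM. exact (nMt (BM t Bt)).
Qed.

Section DistributiveLattice.

Variables (T : Type) (m j : T -> T -> T).
Hypotheses (mA : forall x y z, m x (m y z) = m (m x y) z)
  (jA : forall x y z, j x (j y z) = j (j x y) z)
  (mC : forall x y, m x y = m y x) (jC : forall x y, j x y = j y x)
  (mjK : forall x y, m x (j x y) = x) (jmK : forall x y, j x (m x y) = x)
  (jmD : forall x y z, j x (m y z) = m (j x y) (j x z)).

Local Notation "x ⊑ y" := (m x y = x) (at level 70).

Lemma lat_le_refl x : x ⊑ x.
Proof. rewrite <- (jmK x x) at 2. apply mjK. Qed.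

Lemma lat_le_trans x y z : x ⊑ y -> y ⊑ z -> x ⊑ z.
Proof. intros Hxy Hyz. rewrite <- Hxy, <- mA, Hyz. reflexivity. Qed.

Lemma lat_le_join_eq x y : x ⊑ y <-> j x y = y.
Proof.
split; intros H.
- rewrite <- H, jC, mC. apply jmK.
- rewrite <- H. apply mjK.
Qed.

Lemma lat_le_joinl x y : x ⊑ j x y.
Proof. apply mjK. Qed.

Lemma lat_le_joinr x y : y ⊑ j x y.
Proof. rewrite jC. apply mjK. Qed.

Lemma lat_join_lub x y z : x ⊑ z -> y ⊑ z -> j x y ⊑ z.
Proof.
rewrite !lat_le_join_eq. intros Hx Hy. rewrite <- jA, Hy, Hx. reflexivity.
Qed.

Lemma lat_join_mono x y x' y' : x ⊑ x' -> y ⊑ y' -> j x y ⊑ j x' y'.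
Proof.
intros Hx Hy. apply lat_join_lub.
- apply lat_le_trans with x'; [exact Hx | apply lat_le_joinl].
- apply lat_le_trans with y'; [exact Hy | apply lat_le_joinr].
Qed.

Definition down_closed (I : T -> Prop) := forall x y, I y -> x ⊑ y -> I x.
Definition up_closed (F : T -> Prop) := forall x y, F x -> x ⊑ y -> F y.
Definition join_closed (I : T -> Prop) := forall x y, I x -> I y -> I (j x y).
Definition meet_closed (F : T -> Prop) := forall x y, F x -> F y -> F (m x y).

(* The ideals disjoint from [F] that contain [b] unless empty; the empty set is
   admitted so that the union of the empty chain qualifies. *)
Definition avoiding_ideal (F : T -> Prop) b (I : T -> Prop) :=
  down_closed I /\ join_closed I /\ (forall x, I x -> ~ F x) /\ ((exists x, I x) -> I b).

Lemma avoiding_ideal_chain_union (F : T -> Prop) b (C : (T -> Prop) -> Prop) :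
  (forall I, C I -> avoiding_ideal F b I) ->
  (forall I J, C I -> C J -> (forall t, I t -> J t) \/ (forall t, J t -> I t)) ->
  avoiding_ideal F b (fun t => exists2 I, C I & I t).
Proof.
intros Cideal Ctotal. split; [|split; [|split]].
- intros x y [Y CY Yy] Hxy. exists Y; [exact CY|]. exact (proj1 (Cideal Y CY) x y Yy Hxy).
- intros x y [X CX Xx] [Y CY Yy].
  destruct (Ctotal X Y CX CY) as [XY | YX].
  + exists Y; [exact CY|]. apply (Cideal Y CY); auto.
  + exists X; [exact CX|]. apply (Cideal X CX); auto.
- intros x [X CX Xx]. exact (proj1 (proj2 (proj2 (Cideal X CX))) x Xx).
- intros [x [X CX Xx]]. exists X; [exact CX|]. apply (Cideal X CX). exists x; exact Xx.
Qed.

Lemma join_generated_ideal (I : T -> Prop) x :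
  join_closed I -> down_closed (fun z => exists i, I i /\ z ⊑ j i x) /\
    join_closed (fun z => exists i, I i /\ z ⊑ j i x).
Proof.
intros Ijoin. split.
- intros z w [i [Ii Hw]] Hzw. exists i. split; [exact Ii | exact (lat_le_trans Hzw Hw)].
- intros z w [i1 [Ii1 Hz]] [i2 [Ii2 Hw]]. exists (j i1 i2). split; [exact (Ijoin _ _ Ii1 Ii2)|].
  apply lat_join_lub.
  + apply lat_le_trans with (j i1 x); [exact Hz|].
    apply lat_join_mono; [apply lat_le_joinl | apply lat_le_refl].
  + apply lat_le_trans with (j i2 x); [exact Hw|].
    apply lat_join_mono; [apply lat_le_joinr | apply lat_le_refl].
Qed.

(* The last condition is the maximality of [I] among the ideals avoiding [F]:
   the ideal generated by [I] and any [x ∉ I] meets [F]. *)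
Lemma ex_maximal_ideal_avoiding (F : T -> Prop) b :
  up_closed F -> ~ F b ->
  exists I, I b /\ down_closed I /\ join_closed I /\ (forall x, I x -> ~ F x) /\
    forall x, ~ I x -> exists i, I i /\ F (j i x).
Proof.
intros Fup Fb.
destruct (@zorn_subset T (avoiding_ideal F b) (@avoiding_ideal_chain_union F b))
  as [I [[Idown [Ijoin [IF Ib_of_inhabited]]] Imax]].
assert (Ib : I b).
{ apply NNPP; intros nIb.
  apply nIb, (Imax (fun x => x ⊑ b)); [| | apply lat_le_refl].
  - split; [|split; [|split]].
    + intros x y Hyb Hxy. exact (lat_le_trans Hxy Hyb).
    + intros x y. apply lat_join_lub.
    + intros x Hxb Fx. exact (Fb (Fup x b Fx Hxb)).
    + intros _. apply lat_le_refl.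
  - intros x Ix. exfalso. apply nIb, Ib_of_inhabited. exists x; exact Ix. }
exists I. split; [exact Ib|]. split; [exact Idown|]. split; [exact Ijoin|].
split; [exact IF|].
intros x nIx. apply NNPP; intros nF.
destruct (join_generated_ideal x Ijoin) as [Jdown Jjoin].
apply nIx, (Imax (fun z => exists i, I i /\ z ⊑ j i x)).
- split; [exact Jdown|]. split; [exact Jjoin|]. split.
  + intros z [i [Ii Hz]] Fz. apply nF. exists i. split; [exact Ii | exact (Fup z _ Fz Hz)].
  + intros _. exists b. split; [exact Ib | apply lat_le_joinl].
- intros z Iz. exists z. split; [exact Iz | apply lat_le_joinl].
- exists b. split; [exact Ib | apply lat_le_joinr].
Qed.

Lemma maximal_ideal_prime (F I : T -> Prop) :
  up_closed F -> meet_closed F -> join_closed I -> (forall x, I x -> ~ F x) ->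
  (forall x, ~ I x -> exists i, I i /\ F (j i x)) ->
  forall x y, I (m x y) -> I x \/ I y.
Proof.
intros Fup Fmeet Ijoin IF Imax x y Ixy. apply NNPP; intros nIxy.
destruct (Imax x) as [i1 [Ii1 Fx]]; [intros Ix; apply nIxy; left; exact Ix|].
destruct (Imax y) as [i2 [Ii2 Fy]]; [intros Iy; apply nIxy; right; exact Iy|].
apply (IF (j (j i1 i2) (m x y))); [exact (Ijoin _ _ (Ijoin _ _ Ii1 Ii2) Ixy)|].
rewrite jmD. apply Fmeet.
- apply (Fup _ _ Fx). apply lat_join_mono; [apply lat_le_joinl | apply lat_le_refl].
- apply (Fup _ _ Fy). apply lat_join_mono; [apply lat_le_joinr | apply lat_le_refl].
Qed.

Lemma ex_prime_ideal_avoiding (F : T -> Prop) b :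
  up_closed F -> meet_closed F -> ~ F b ->
  exists I, I b /\ down_closed I /\ join_closed I /\
    (forall x y, I (m x y) -> I x \/ I y) /\ (forall x, I x -> ~ F x) /\
    forall x, ~ I x -> exists i, I i /\ F (j i x).
Proof.
intros Fup Fmeet Fb.
destruct (@ex_maximal_ideal_avoiding F b Fup Fb) as [I [Ib [Idown [Ijoin [IF Imax]]]]].
exists I. repeat split; auto.
exact (maximal_ideal_prime Fup Fmeet Ijoin IF Imax).
Qed.

End DistributiveLattice.

Section Representation.

Variable A : WHB.
Implicit Types a b c i q x y z : A.

Local Notation "x ≤ y" := (le A x y) (at level 70).

Lemma le_refl x : x ≤ x.
Proof. exact (@lat_le_refl A meet join (@meet_absorb A) (@join_absorb A) x). Qed.

Lemma le_trans x y z : x ≤ y -> y ≤ z -> x ≤ z.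
Proof. exact (@lat_le_trans A meet (@meetA A) x y z). Qed.

Lemma le_antisym x y : x ≤ y -> y ≤ x -> x = y.
Proof.
unfold le. intros Hxy Hyx.
transitivity (meet x y); [symmetry; exact Hxy | rewrite meetC; exact Hyx].
Qed.

Lemma le_join_eq x y : x ≤ y <-> join x y = y.
Proof.
exact (@lat_le_join_eq A meet join (@meetC A) (@joinC A) (@meet_absorb A) (@join_absorb A)
  x y).
Qed.

Lemma join_lel x y : x ≤ join x y.
Proof. apply meet_absorb. Qed.

Lemma join_ler x y : y ≤ join x y.
Proof. unfold le. rewrite joinC. apply meet_absorb. Qed.

Lemma join_lub x y z : x ≤ z -> y ≤ z -> join x y ≤ z.
Proof.
exact (@lat_join_lub A meet join (@joinA A) (@meetC A) (@joinC A) (@meet_absorb A)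
  (@join_absorb A) x y z).
Qed.

Lemma meet_lel x y : meet x y ≤ x.
Proof. unfold le. rewrite <- meetA, (meetC _ y x), meetA, le_refl. reflexivity. Qed.

Lemma meet_ler x y : meet x y ≤ y.
Proof. rewrite meetC. apply meet_lel. Qed.

Lemma meet_glb x y z : z ≤ x -> z ≤ y -> z ≤ meet x y.
Proof. unfold le. intros Hx Hy. rewrite meetA, Hx, Hy. reflexivity. Qed.

Lemma le_bot x : bot A ≤ x.
Proof. apply le_join_eq. rewrite joinC. apply join_bot. Qed.

Lemma le_top x : x ≤ top A.
Proof. apply meet_top. Qed.

Lemma join_meetD i x y : join i (meet x y) = meet (join i x) (join i y).
Proof.
rewrite meet_joinD, (meetC _ (join i x) i), meet_absorb, (meetC _ (join i x) y), meet_joinD,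
  joinA, (meetC _ y i), join_absorb, (meetC _ y x).
reflexivity.
Qed.

Lemma imp_mono_r a b c : b ≤ c -> imp a b ≤ imp a c.
Proof. intros Hbc. unfold le. rewrite <- imp_meet, Hbc. reflexivity. Qed.

Lemma imp_of_le a b : a ≤ b -> imp a b = top A.
Proof.
intros Hab. apply le_antisym; [apply le_top|].
rewrite <- (imp_refl _ a). exact (imp_mono_r a Hab).
Qed.

Lemma imp_join_mono i x y : imp x y ≤ imp (join i x) (join i y).
Proof.
rewrite imp_join, (imp_of_le (join_lel i y)).
apply meet_glb; [apply le_top | apply imp_mono_r, join_ler].
Qed.

Lemma coimp_mono_l a a' b : a ≤ a' -> coimp a b ≤ coimp a' b.
Proof. intros Ha. apply le_join_eq in Ha. rewrite <- Ha, coimp_join. apply join_lel. Qed.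

Lemma coimp_of_le a b : a ≤ b -> coimp a b = bot A.
Proof.
intros Hab. apply le_antisym; [|apply le_bot].
rewrite <- (coimp_refl _ b). exact (coimp_mono_l b Hab).
Qed.

Lemma coimp_meet_mono q x y : coimp (meet q x) (meet q y) ≤ coimp x y.
Proof.
rewrite coimp_meet, (coimp_of_le (meet_lel q x)).
apply join_lub; [apply le_bot | apply coimp_mono_l, meet_ler].
Qed.

Lemma pf_top (P : pfilter A) : pf P (top A).
Proof. apply (proj2_sig P). Qed.

Lemma pf_up {P : pfilter A} {a b} : pf P a -> a ≤ b -> pf P b.
Proof. apply (proj2_sig P). Qed.

Lemma pf_meet {P : pfilter A} {a b} : pf P a -> pf P b -> pf P (meet a b).
Proof. apply (proj2_sig P). Qed.

Lemma pf_bot (P : pfilter A) : ~ pf P (bot A).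
Proof. apply (proj2_sig P). Qed.

Lemma pf_prime {P : pfilter A} {a b} : pf P (join a b) -> pf P a \/ pf P b.
Proof. apply (proj2_sig P). Qed.

Lemma ex_pfilter_extending (F : A -> Prop) b :
  F (top A) -> (forall x y, F x -> x ≤ y -> F y) ->
  (forall x y, F x -> F y -> F (meet x y)) -> ~ F b ->
  exists Q : pfilter A, (forall x, F x -> pf Q x) /\ ~ pf Q b /\
    forall x, pf Q x -> exists i, ~ pf Q i /\ F (join i x).
Proof.
intros Ftop Fup Fmeet Fb.
destruct (@ex_prime_ideal_avoiding A meet join (@meetA A) (@joinA A) (@meetC A) (@joinC A)
  (@meet_absorb A) (@join_absorb A) join_meetD F b Fup Fmeet Fb)
  as [I [Ib [Idown [Ijoin [Iprime [IF Imax]]]]]].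
assert (Qprime : prime_filter A (fun x => ~ I x)).
{ split; [|split; [|split; [|split]]].
  - intros Itop. exact (IF _ Itop Ftop).
  - intros x y nIx Hxy Iy. exact (nIx (Idown x y Iy Hxy)).
  - intros x y nIx nIy Ixy. destruct (Iprime x y Ixy); contradiction.
  - intros nIbot. exact (nIbot (Idown _ b Ib (le_bot b))).
  - intros x y nIxy. apply NNPP; intros nQxy.
    apply nIxy, Ijoin; apply NNPP; intros nI; apply nQxy; auto. }
exists (exist _ _ Qprime); simpl.
split; [|split].
- intros x Fx Ix. exact (IF x Ix Fx).
- intros nIb. exact (nIb Ib).
- intros x nIx. destruct (Imax x nIx) as [i [Ii Fi]].
  exists i. split; [intros nIi; exact (nIi Ii) | exact Fi].
Qed.

Lemma ex_pfilter_avoiding (E : A -> Prop) a :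
  E (bot A) -> (forall x y, E y -> x ≤ y -> E x) ->
  (forall x y, E x -> E y -> E (join x y)) -> ~ E a ->
  exists Q : pfilter A, pf Q a /\ (forall x, E x -> ~ pf Q x) /\
    forall x, ~ pf Q x -> exists q, pf Q q /\ E (meet q x).
Proof.
intros Ebot Edown Ejoin Ea.
assert (Edual : up_closed join E).
{ intros x y Ex Hyx. apply (Edown y x Ex). apply le_join_eq. rewrite joinC. exact Hyx. }
destruct (@ex_prime_ideal_avoiding A join meet (@joinA A) (@meetA A) (@joinC A) (@meetC A)
  (@join_absorb A) (@meet_absorb A) (@meet_joinD A) E a Edual Ejoin Ea)
  as [Q [Qa [Qup [Qmeet [Qprime [QE Qmax]]]]]].
assert (Qfilter : prime_filter A Q).
{ split; [|split; [|split; [|split]]].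
  - apply (Qup _ a Qa). rewrite joinC. apply le_join_eq, le_top.
  - intros x y Qx Hxy. apply (Qup y x Qx). rewrite joinC. apply le_join_eq, Hxy.
  - exact Qmeet.
  - intros Qbot. exact (QE _ Qbot Ebot).
  - exact Qprime. }
exists (exist _ _ Qfilter); simpl. split; [exact Qa|]. split; [|exact Qmax].
intros x Ex Qx. exact (QE x Qx Ex).
Qed.

Lemma le_of_pfilter_sub a b : (forall Q : pfilter A, pf Q a -> pf Q b) -> a ≤ b.
Proof.
intros Hab. apply NNPP; intros nab.
destruct (@ex_pfilter_extending (le A a) b) as [Q [Qa [Qb _]]].
- apply le_top.
- intros x y. apply le_trans.
- intros x y. apply meet_glb.
- exact nab.
- exact (Qb (Hab Q (Qa a (le_refl a)))).
Qed.

Lemma imp_complete (P : pfilter A) a b :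
  (forall Q, RA P Q -> pf Q a -> pf Q b) -> pf P (imp a b).
Proof.
intros Hab. apply NNPP; intros nPab.
destruct (@ex_pfilter_extending (fun x => pf P (imp a x)) b) as [Q [PQ [Qb Qmax]]].
- rewrite (imp_of_le (le_top a)). apply pf_top.
- intros x y Px Hxy. exact (pf_up Px (imp_mono_r a Hxy)).
- intros x y Px Py. rewrite imp_meet. exact (pf_meet Px Py).
- exact nPab.
- apply Qb, (Hab Q); [|apply PQ; rewrite imp_refl; apply pf_top].
  intros x y Pxy Qx. apply NNPP; intros nQy.
  destruct (Qmax x Qx) as [i [nQi Pix]].
  assert (Piy : pf P (imp a (join i y))).
  { apply (pf_up (pf_meet Pix (pf_up Pxy (imp_join_mono i x y)))). apply imp_trans. }
  destruct (pf_prime (PQ _ Piy)); contradiction.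
Qed.

Lemma coimp_complete (P : pfilter A) a b :
  pf P (coimp a b) -> exists Q, SA P Q /\ pf Q a /\ ~ pf Q b.
Proof.
intros Pab.
destruct (@ex_pfilter_avoiding (fun x => ~ pf P (coimp x b)) a) as [Q [Qa [QP Qmax]]].
- rewrite (coimp_of_le (le_bot b)). apply pf_bot.
- intros x y nPy Hxy Px. exact (nPy (pf_up Px (coimp_mono_l b Hxy))).
- intros x y nPx nPy Pxy. rewrite coimp_join in Pxy.
  destruct (pf_prime Pxy); contradiction.
- intros nPab. exact (nPab Pab).
- exists Q. split; [|split; [exact Qa|]].
  + intros x y Qx nQy.
    destruct (Qmax y nQy) as [q [Qq nPqy]].
    assert (Pqx : pf P (coimp (meet q x) b)).
    { apply NNPP; intros nPqx. exact (QP _ nPqx (pf_meet Qq Qx)). }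
    destruct (pf_prime (pf_up Pqx (coimp_trans _ (meet q x) (meet q y) b))) as [Pxy | Pyb];
      [|contradiction].
    exact (pf_up Pxy (coimp_meet_mono q x y)).
  + intros Qb. apply (QP b); [|exact Qb]. rewrite coimp_refl. apply pf_bot.
Qed.

Definition stone a : pfilter A -> Prop := fun P => pf P a.

Lemma pfilter_set_ext (U V : pfilter A -> Prop) : (forall P, U P <-> V P) -> U = V.
Proof.
intros HUV. apply functional_extensionality. intros P.
apply propositional_extensionality, HUV.
Qed.

Lemma stone_upset a : is_upset (stone a).
Proof. intros P Q PQ Pa. exact (PQ a Pa). Qed.

Lemma stone_inj a b : stone a = stone b -> a = b.
Proof.
intros Hab. apply le_antisym; apply le_of_pfilter_sub; intros Q.
- change (stone a Q -> stone b Q). rewrite Hab. auto.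
- change (stone b Q -> stone a Q). rewrite Hab. auto.
Qed.

Lemma stone_meet a b : stone (meet a b) = set_cap (stone a) (stone b).
Proof.
apply pfilter_set_ext. intros P. split.
- intros Pab. split; [exact (pf_up Pab (meet_lel a b)) | exact (pf_up Pab (meet_ler a b))].
- intros [Pa Pb]. exact (pf_meet Pa Pb).
Qed.

Lemma stone_join a b : stone (join a b) = set_cup (stone a) (stone b).
Proof.
apply pfilter_set_ext. intros P. split.
- apply pf_prime.
- intros [Pa | Pb]; [exact (pf_up Pa (join_lel a b)) | exact (pf_up Pb (join_ler a b))].
Qed.

Lemma stone_imp a b : stone (imp a b) = impR (stone a) (stone b).
Proof.
apply pfilter_set_ext. intros P. split.
- intros Pab Q PQ Qa. exact (PQ a b Pab Qa).
- apply imp_complete.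
Qed.

Lemma stone_coimp a b : stone (coimp a b) = coimpS (stone a) (stone b).
Proof.
apply pfilter_set_ext. intros P. split.
- apply coimp_complete.
- intros [Q [PQ [Qa nQb]]]. exact (PQ a b Qa nQb).
Qed.

Lemma stone_bot : stone (bot A) = @set_empty A.
Proof. apply pfilter_set_ext. intros P. split; [apply pf_bot | intros []]. Qed.

Lemma stone_top : stone (top A) = @set_full A.
Proof. apply pfilter_set_ext. intros P. split; [intros _; exact I | intros _; apply pf_top]. Qed.

End Representation.

Theorem theorem4p10 (A : WHB) :
  exists h : A -> (pfilter A -> Prop), embeds_into_complex_algebra h.
Proof.
exists (@stone A).
split; [exact (@stone_upset A)|].
split; [exact (@stone_inj A)|].
split; [exact (@stone_meet A)|].
split; [exact (@stone_join A)|].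
split; [exact (@stone_imp A)|].
split; [exact (@stone_coimp A)|].
exact (conj (stone_bot A) (stone_top A)).
Qed.
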